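(* Let $\beta>0$ and let $S$ be a possible forest with vertex set $\{v_{s_1},\dots,v_{s_k}\}$, $s_1<\dots<s_k$. Then for every $t\ge s_k$, the probability that $S$ is a subgraph of $G^t_{1,\beta}$ is \[ \Pr(S\subset G^t_{1,\beta})=\frac{\beta}{\beta+d_S^{\mathrm{in}}(v_1)}\prod_{\substack{1\le i\le t:\\ v_i\in V^-}}\frac{\Gamma(1+\beta+d_S^{\mathrm{in}}(v_i))}{\Gamma(1+\beta)}\prod_{\substack{1<i\le t:\\ v_i\in V^+}}\frac{1}{(2+\beta)(i-1)-2}\prod_{\substack{1<i\le t:\\ v_i\notin V^+}}\left(1+\frac{c_S(i)}{(2+\beta)(i-1)-2}\right). \]
   Context: Fix a real $\beta>0$ and a positive integer $m$. The random tree process $(G^n_{1,\beta})_{n\ge1}$ is defined as follows. $G^1_{1,\beta}$ consists of a single vertex $v_1$ and no edges. Given $G^n_{1,\beta}$ with vertices $v_1,\dots,v_n$ and directed edges $e_2,\dots,e_n$ (where $e_i$ is the edge whose tail is $v_i$), $G^{n+1}_{1,\beta}$ is obtained by adding a vertex $v_{n+1}$ and a directed edge $e_{n+1}$ with tail $v_{n+1}$ and head a ''target vertex'' determined by a random variable $f_{n+1}$, independent of $f_2,\dots,f_n$, taking values in $\Omega_{n+1}=\{(i,v):1\le i\le n\}\cup\{(i,h),(i,t):2\le i\le n\}$ with $\Pr(f_{n+1}=(i,v))=\beta/((2+\beta)n-2)$ and $\Pr(f_{n+1}=(i,h))=\Pr(f_{n+1}=(i,t))=1/((2+\beta)n-2)$.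 If $f_{n+1}=(i,v)$ the target is $v_i$ (chosen ''uniformly''); if $f_{n+1}=(i,h)$ the target is the head of $e_i$, and if $f_{n+1}=(i,t)$ the target is the tail $v_i$ of $e_i$ (chosen ''preferentially'', by copying the head half-edge, resp. tail half-edge, of $e_i$). Consequently the target is $v_i$ with probability $(d_n(v_i)+\beta)/((2+\beta)n-2)$, where $d_n(v)$ is the degree of $v$ in $G^n_{1,\beta}$. Each edge is regarded as two half-edges, one at each endpoint; the degree of a vertex is the number of half-edges at it (loops count twice). A possible forest is a directed forest $S$ whose vertices are labelled vertices $v_i$ of the process (identified by their index), with no isolated vertices, in which every vertex has out-degree $0$ or $1$, every edge $(v_i,v_j)$ has $i>j$, and $v_1$ (if present) has out-degree $0$. ''$S\subset G^t_{1,\beta}$'' means every edge $(v_i,v_j)$ of $S$ is an edge of $G^t_{1,\beta}$ (with labels matching). $d_S^{\mathrm{in}}(v)$ is the in-degree of $v$ in $S$ (taken to be $0$ if $v\notin V(S)$). $V^-=\{v_i\in V(S):\exists j>i,\ (v_j,v_i)\in E(S)\}$, $V^+=\{v_i\in V(S):\exists j<i,\ (v_i,v_j)\in E(S)\}$. For $t\ge i$, $R_t(i)=|\{j>t:(v_j,v_i)\in E(S)\}|$, and $c_S(i)=\sum_{k=1}^{i-1}R_{i-1}(k)$, i.e. the number of edges of $S$ from $\{v_i,v_{i+1},\dots\}$ to $\{v_1,\dots,v_{i-1}\}$. *)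

From HB Require Import structures.
From mathcomp Require Import all_boot all_order all_algebra.
Set Implicit Arguments. Unset Strict Implicit. Unset Printing Implicit Defensive.
Import Order.TTheory GRing.Theory Num.Theory.
Local Open Scope ring_scope.

(* Vertex v_i is identified with the natural number i (i >= 1).
   A state G^n is encoded by the list hs of heads of the edges e_2,...,e_n:
   the head of e_i is nth 0 hs (i-2). *)

Definition headof (hs : seq nat) (i : nat) : nat := nth 0%N hs (i - 2)%N.

Inductive kind := KV | KH | KT.

(* Omega_{n+1} = {(i,v) : 1<=i<=n} u {(i,h),(i,t) : 2<=i<=n}. *)
Definition omega (n : nat) : seq (nat * kind) :=
  [seq (i, KV) | i <- iota 1 n] ++ [seq (i, KH) | i <- iota 2 n.-1]
  ++ [seq (i, KT) | i <- iota 2 n.-1].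

Definition denom {R : realFieldType} (beta : R) (n : nat) : R :=
  (2 + beta) * n%:R - 2.

Definition pf {R : realFieldType} (beta : R) (n : nat) (w : nat * kind) : R :=
  match w.2 with
  | KV => beta / denom beta n
  | KH => 1 / denom beta n
  | KT => 1 / denom beta n
  end.

Definition target (hs : seq nat) (w : nat * kind) : nat :=
  match w.2 with
  | KV => w.1
  | KH => headof hs w.1
  | KT => w.1
  end.

(* run k n hs F = expectation of F(state after k more steps), starting from
   the state hs of G^n; the f's are independent with laws pf. *)
Fixpoint run {R : realFieldType} (beta : R) (k n : nat) (hs : seq nat)
  (F : seq nat -> R) : R :=
  match k with
  | 0 => F hs
  | k'.+1 => \sum_(w <- omega n) pf beta n w * run beta k' n.+1 (rcons hs (target hs w)) F
  end.

Definition Prob {R : realFieldType} (beta : R) (t : nat) (P : pred (seq nat)) : R :=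
  run beta t.-1 1 [::] (fun hs => if P hs then 1 else 0).

(* A possible forest S is given by its list of edges E, an edge (i,j) meaning
   (v_i, v_j); its vertex set is the set of endpoints (no isolated vertices). *)
Definition possible_forest (E : seq (nat * nat)) : Prop :=
  [/\ uniq E,
      (forall e, e \in E -> (1 <= e.2)%N /\ (e.2 < e.1)%N)
    & uniq (map fst E)].   (* out-degree 0 or 1 *)

Definition vertices (E : seq (nat * nat)) : seq nat :=
  [seq e.1 | e <- E] ++ [seq e.2 | e <- E].

Definition subgraph_of (E : seq (nat * nat)) (t : nat) (hs : seq nat) : bool :=
  all (fun e => (2 <= e.1 <= t)%N && (headof hs e.1 == e.2)) E.

Definition din (E : seq (nat * nat)) (v : nat) : nat := count (fun e => e.2 == v) E.
Definition inVminus (E : seq (nat * nat)) (i : nat) : bool :=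
  has (fun e => (e.2 == i) && (i < e.1)%N) E.
Definition inVplus (E : seq (nat * nat)) (i : nat) : bool :=
  has (fun e => (e.1 == i) && (e.2 < i)%N) E.
Definition Rt (E : seq (nat * nat)) (t i : nat) : nat :=
  count (fun e => (t < e.1)%N && (e.2 == i)) E.
Definition cS (E : seq (nat * nat)) (i : nat) : nat :=
  (\sum_(1 <= k < i) Rt E i.-1 k)%N.

(* Gamma(x + d) / Gamma(x) for a natural number d (Gamma is not available in
   the library; for integer d this ratio is the rising factorial). *)
Definition gamma_ratio {R : realFieldType} (x : R) (d : nat) : R :=
  \prod_(j < d) (x + j%:R).

(* Write n for the number of vertices of the current state, a_k = d_n(v_k) + beta
   for the attachment weight of v_k (so that sum_k a_k = (2+beta)n - 2 =: D_n and
   the target of e_{n+1} is v_j with probability a_j / D_n), and R_n(k) for the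
   number of edges of S from {v_{n+1}, ...} into v_k.  The random variable
     W_n = [the edges of S with tail <= n are in G^n] * prod_{k<=n} a_k^(R_n(k)),
   with x^(m) = x (x+1) ... (x+m-1) the rising factorial (gamma_ratio), satisfies
     E[W_{n+1} | G^n] = (1+beta)^(d_S^in(v_{n+1})) * c_n * W_n,
   where c_n = 1/D_n if v_{n+1} has an out-edge in S and c_n = 1 + c_S(n+1)/D_n
   otherwise.  Iterating from W_1 = beta^(d_S^in(v_1)) up to W_t, which is the
   indicator of S being a subgraph of G^t, gives the formula. *)

From HB Require Import structures.
From mathcomp Require Import all_boot all_order all_algebra ring.
Import Order.TTheory GRing.Theory Num.Theory.
Local Open Scope ring_scope.

Section RisingFactorial.
Variable R : realFieldType.
Implicit Types (a : R) (m : nat).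

Lemma gamma_ratio0 a : gamma_ratio a 0 = 1.
Proof. by rewrite /gamma_ratio big_ord0. Qed.

Lemma gamma_ratio_recl a m : gamma_ratio a m.+1 = a * gamma_ratio (a + 1) m.
Proof.
rewrite /gamma_ratio big_ord_recl addr0; congr (_ * _).
by apply: eq_bigr => i _; rewrite lift0 /= -natr1 -addrA [1 + _]addrC.
Qed.

Lemma gamma_ratio_recr a m : gamma_ratio a m.+1 = gamma_ratio a m * (a + m%:R).
Proof. by rewrite /gamma_ratio big_ord_recr. Qed.

(* beta^(d) = beta / (beta + d) * (1 + beta)^(d): the factor of v_1 in the formula. *)
Lemma gamma_ratio_shift a m : a + m%:R != 0 ->
  gamma_ratio a m = a / (a + m%:R) * gamma_ratio (1 + a) m.
Proof.
move=> nz; apply: (mulIf nz); rewrite -gamma_ratio_recr gamma_ratio_recl.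
by rewrite mulrAC divfK // addrC.
Qed.

Lemma prod_gamma_bump (r : seq nat) (a : nat -> R) (rr : nat -> nat) j :
  j \in r -> uniq r ->
  a j * \prod_(k <- r) gamma_ratio (a k + (k == j)%:R) (rr k) =
  \prod_(k <- r) gamma_ratio (a k) (rr k) * (a j + (rr j)%:R).
Proof.
move=> jr ur; rewrite !(bigD1_seq j) //= eqxx.
rewrite (eq_bigr (fun k => gamma_ratio (a k) (rr k))); last first.
  by move=> k /negbTE ->; rewrite addr0.
by rewrite mulrA -gamma_ratio_recl gamma_ratio_recr mulrAC.
Qed.

Lemma prod_gamma_incr (r : seq nat) (a : nat -> R) (rr : nat -> nat) j :
  j \in r -> uniq r ->
  \prod_(k <- r) gamma_ratio (a k) (rr k + (j == k))%N =
  a j * \prod_(k <- r) gamma_ratio (a k + (k == j)%:R) (rr k).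
Proof.
move=> jr ur; rewrite !(bigD1_seq j) //= eqxx addn1 gamma_ratio_recl mulrA.
congr (_ * _); apply: eq_bigr => k /negbTE kj.
by rewrite kj eq_sym kj addr0 addn0.
Qed.

(* The expected product after raising the base of a factor chosen with
   probability proportional to its base. *)
Lemma expect_gamma_bump (r : seq nat) (a : nat -> R) (rr : nat -> nat) (D : R) :
  uniq r -> D = \sum_(j <- r) a j -> D != 0 ->
  \sum_(j <- r) a j / D * \prod_(k <- r) gamma_ratio (a k + (k == j)%:R) (rr k) =
  (1 + \sum_(j <- r) (rr j)%:R / D) * \prod_(k <- r) gamma_ratio (a k) (rr k).
Proof.
move=> ur Dsum D0.
rewrite big_seq (eq_bigr (fun j => D^-1 *
  (\prod_(k <- r) gamma_ratio (a k) (rr k) * (a j + (rr j)%:R)))); last first.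
  by move=> j jr; rewrite -prod_gamma_bump // mulrCA mulrA.
rewrite -big_seq -mulr_sumr -mulr_sumr big_split /= -Dsum -mulr_suml.
by rewrite mulrCA mulrDr mulVf // mulrC [D^-1 * _]mulrC.
Qed.

End RisingFactorial.

Section FiniteSums.
Variable R : realFieldType.

Lemma sum_const_seq (T : Type) (s : seq T) (c : R) :
  \sum_(x <- s) c = c * (size s)%:R.
Proof.
elim: s => [|x s IH]; first by rewrite big_nil mulr0.
by rewrite big_cons IH /= -natr1 mulrDr mulr1 addrC.
Qed.

Lemma sum_pick (r : seq nat) x (g : nat -> R) : x \in r -> uniq r ->
  \sum_(j <- r) (x == j)%:R * g j = g x.
Proof.
move=> xr ur; rewrite (bigD1_seq x) //= eqxx mul1r big1 ?addr0 //.
by move=> j; rewrite eq_sym => /negbTE ->; rewrite mul0r.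
Qed.

Lemma sum_count (s r : seq nat) (g : nat -> R) : {subset s <= r} -> uniq r ->
  \sum_(x <- s) g x = \sum_(j <- r) (count_mem j s)%:R * g j.
Proof.
move=> + ur; elim: s => [|x s IH] sr.
  by rewrite big_nil big1 // => j _; rewrite mul0r.
have xr : x \in r by apply: sr; rewrite mem_head.
rewrite big_cons IH => [|y ys]; last by apply: sr; rewrite in_cons ys orbT.
rewrite -(sum_pick r x g xr ur) -big_split /=.
by apply: eq_bigr => j _; rewrite natrD mulrDl.
Qed.

Lemma prod_if (r : seq nat) (P : pred nat) (A B : nat -> R) :
  \prod_(i <- r) (if P i then A i else B i) =
  \prod_(i <- r | P i) A i * \prod_(i <- r | ~~ P i) B i.
Proof.
rewrite (bigID P) /=; congr (_ * _); apply: eq_bigr => i; first by move=> ->.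
by move=> /negbTE ->.
Qed.

End FiniteSums.

Definition kind_code (k : kind) : nat := match k with KV => 0 | KH => 1 | KT => 2 end.
Definition code_kind (n : nat) : kind := match n with 0 => KV | 1 => KH | _ => KT end.
Lemma kind_codeK : cancel kind_code code_kind. Proof. by case. Qed.
HB.instance Definition _ := Equality.copy kind (can_type kind_codeK).

Definition valid (n : nat) (hs : seq nat) : bool :=
  [&& (0 < n)%N, size hs == n.-1 & all (fun x => (0 < x <= n)%N) hs].

(* Degree of v_k in the state hs: one for its own out-edge e_k (k >= 2),
   plus the number of edges pointing to it. *)
Definition deg (hs : seq nat) (k : nat) : nat :=
  (((1 < k) && (k <= (size hs).+1))%N : nat) + count_mem k hs.

Lemma valid_rcons n hs x : valid n hs -> (0 < x <= n)%N -> valid n.+1 (rcons hs x).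
Proof.
move=> /and3P [n0 /eqP sz al] /andP [x0 xn].
rewrite /valid /= size_rcons sz prednK // eqxx all_rcons x0 (leqW xn) /=.
by apply: sub_all al => y /andP [-> /leqW ->].
Qed.

Lemma target_range n hs w : valid n hs -> w \in omega n ->
  (0 < target hs w <= n)%N.
Proof.
move=> /and3P [n0 /eqP sz /allP al].
rewrite /omega !mem_cat => /or3P [] /mapP [i + ->]; rewrite mem_iota /=.
- by rewrite add1n ltnS.
- move=> /andP [i2 ilt]; apply: al; rewrite /headof; apply: mem_nth.
  by rewrite sz -(ltn_add2l 2) subnKC.
- move=> /andP [i2 ilt]; rewrite (leq_trans _ i2) //= -ltnS.
  by apply: (leq_trans ilt); rewrite add2n prednK.
Qed.

Lemma run_ext (R : realFieldType) (beta : R) k n hs (F G : seq nat -> R) :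
  valid n hs -> (forall hs', valid (n + k) hs' -> F hs' = G hs') ->
  run beta k n hs F = run beta k n hs G.
Proof.
elim: k n hs => [|k IH] n hs vh FG /=; first by apply: FG; rewrite addn0.
apply: eq_big_seq => w win; congr (_ * _); apply: IH.
  by apply: valid_rcons => //; apply: target_range.
by move=> hs' v; apply: FG; rewrite addnS -addSn.
Qed.

Section TargetLaw.
Variables (R : realFieldType) (beta : R).

Lemma denom_gt0 n : 0 < beta -> (0 < n)%N -> 0 < denom beta n.
Proof.
move=> b0; case: n => // m _.
rewrite /denom -(natr1 m) mulrDr mulr1 [2 + beta]addrC addrA addrK.
by apply: ltr_wpDl => //; apply: mulr_ge0 => //; apply: addr_ge0 => //; apply: ltW.
Qed.

Lemma target_law (g : nat -> R) n hs : valid n hs ->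
  \sum_(w <- omega n) pf beta n w * g (target hs w) =
  \sum_(j <- iota 1 n) ((deg hs j)%:R + beta) / denom beta n * g j.
Proof.
move=> /and3P [n0 /eqP sz al].
case: n n0 sz al => // m _ /= sz al.
set D := denom beta m.+1.
rewrite /omega !big_cat !big_map /=.
(* The choices (i,v), (i,h) and (i,t) account for beta, the in-degree and
   the out-edge of v_j respectively. *)
have -> : \sum_(j <- iota 1 m.+1) ((deg hs j)%:R + beta) / D * g j =
  \sum_(j <- iota 1 m.+1) beta / D * g j +
  (\sum_(j <- iota 1 m.+1) (count_mem j hs)%:R * (1 / D * g j) +
  \sum_(j <- iota 1 m.+1) ((((1 < j) && (j <= (size hs).+1))%N : nat)%:R / D * g j)).
  rewrite -!big_split /=; apply: eq_bigr => j _.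
  rewrite /deg natrD !mulrDl mul1r mulrA addrC; congr (_ + _); exact: addrC.
rewrite /pf /target /= -(sum_count _ hs (iota 1 m.+1) (fun j => 1 / D * g j)); last 2 first.
- by move=> x /(allP al) /andP [x0 xm]; rewrite mem_iota add1n ltnS x0.
- exact: iota_uniq.
congr (_ + (_ + _)).
- rewrite (iotaDl 2 0) big_map -{2}(mkseq_nth 0 hs) /mkseq big_map sz.
  by apply: eq_bigr => i _; rewrite /headof addKn.
- rewrite big_cons /= mul0r mul0r add0r !big_seq; apply: eq_bigr => j.
  by rewrite mem_iota sz => /andP [j2 jm]; rewrite j2 /= -ltnS -[m.+2]add2n jm.
Qed.

Lemma sum_deg n hs : valid n hs ->
  \sum_(j <- iota 1 n) (deg hs j)%:R = (n.-1 + n.-1)%:R :> R.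
Proof.
move=> /and3P [n0 /eqP sz al]; case: n n0 sz al => // m _ sz al; simpl in sz.
rewrite /deg; under eq_bigr do rewrite natrD.
rewrite big_split natrD; congr (_ + _).
  rewrite big_cons /= add0r big_seq (eq_bigr (fun _ => 1)); last first.
    by move=> j; rewrite mem_iota sz => /andP [j2 jm]; rewrite j2 /= -ltnS -[m.+2]add2n jm.
  by rewrite -big_seq sum_const_seq size_iota mul1r.
have -> : (m%:R : R) = \sum_(x <- hs) 1 by rewrite sum_const_seq mul1r sz.
rewrite (sum_count _ hs (iota 1 m.+1) (fun _ => 1 : R)); last exact: iota_uniq.
  by apply: eq_bigr => j _; rewrite mulr1.
by move=> x /(allP al) /andP [x0 xm]; rewrite mem_iota add1n ltnS x0.
Qed.

Lemma sum_weights n hs : valid n hs ->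
  \sum_(j <- iota 1 n) ((deg hs j)%:R + beta) = denom beta n.
Proof.
move=> vh; rewrite big_split (sum_deg n hs vh) sum_const_seq size_iota.
case: n vh => [|m] /and3P [//] _ _ _ /=.
by rewrite /denom mulrDl [beta * _]mulrC -natrM addrAC mul2n doubleS -addnn -addn2 !natrD addrK.
Qed.

End TargetLaw.

Lemma deg_rcons hs j k :
  deg (rcons hs j) k = (deg hs k + (k == (size hs).+2) + (k == j))%N.
Proof.
rewrite /deg size_rcons -cats1 count_cat /= addn0 [(k == j)%N]eq_sym addnA; congr (_ + _).
suff -> : ((1 < k <= (size hs).+2)%N : nat) =
          ((1 < k <= (size hs).+1)%N : nat) + (k == (size hs).+2)%N by rewrite addnAC.
case: (ltngtP k (size hs).+2) => h.
- by rewrite ltnS in h; rewrite h; case: (1 < k)%N.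
- by rewrite [(k <= _)%N]leqNgt (ltnW h) andbF.
- by rewrite h ltnn andbF andbT.
Qed.

Definition out_edges (E : seq (nat * nat)) (i : nat) : seq (nat * nat) :=
  [seq e <- E | e.1 == i].

Lemma size_out_edges E i : uniq (map fst E) -> (size (out_edges E i) <= 1)%N.
Proof.
move=> Eu; rewrite size_filter -(count_map fst (pred1 i)) count_uniq_mem //.
exact: leq_b1.
Qed.

Definition edges_present (E : seq (nat * nat)) (hs : seq nat) : bool :=
  all (fun e => (e.1 <= (size hs).+1)%N ==> (headof hs e.1 == e.2)) E.

Lemma Rt_split E n k :
  Rt E n k = (Rt E n.+1 k + count (fun e => e.2 == k) (out_edges E n.+1))%N.
Proof.
rewrite count_filter; elim: E => //= e E ->; rewrite addnACA; congr (_ + _).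
by case: (e.2 == k); rewrite ?andbF ?andbT //; case: (ltngtP e.1 n.+1).
Qed.

Section Forest.
Variables (R : realFieldType) (beta : R) (E : seq (nat * nat)).
Hypothesis E_down : forall e, e \in E -> (1 <= e.2 < e.1)%N.

Lemma tail_ge2 e : e \in E -> (2 <= e.1)%N.
Proof. by move=> /E_down /andP [h1 h2]; apply: leq_ltn_trans h2. Qed.

Lemma Rt_top n : Rt E n n = din E n.
Proof.
apply: eq_in_count => e /E_down /andP [_ h] /=.
by case: eqP => [<-|]; rewrite ?andbT ?andbF.
Qed.

Lemma inVplus_out_edges i : inVplus E i = (out_edges E i != [::]).
Proof.
rewrite /inVplus has_filter; congr (_ != _); apply: eq_in_filter => e /E_down /andP [_ h].
by case: eqP => [<-|] //=; rewrite h.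
Qed.

Lemma edges_present_rcons hs j : edges_present E (rcons hs j) =
  edges_present E hs && all (fun e => j == e.2) (out_edges E (size hs).+2).
Proof.
rewrite /edges_present all_filter -all_predI; apply: eq_in_all => e /tail_ge2 e2 /=.
rewrite size_rcons /headof nth_rcons.
case: (ltngtP e.1 (size hs).+2) => h.
- have h1 : (e.1 <= (size hs).+1)%N by rewrite -ltnS.
  by rewrite h1 (ltn_subLR _ e2) add2n h /= andbT.
- by rewrite [(e.1 <= _)%N]leqNgt (ltnW h).
- by rewrite h -addn2 addnK ltnn eqxx /= addn2 ltnn.
Qed.

(* The weight W_n of a state of G^n (n = size hs + 1). *)
Definition weight (hs : seq nat) : R :=
  (edges_present E hs)%:R * \prod_(k <- iota 1 (size hs).+1)
     gamma_ratio ((deg hs k)%:R + beta) (Rt E (size hs).+1 k).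

Definition growth (n : nat) : R :=
  gamma_ratio (1 + beta) (din E n.+1) *
  (if inVplus E n.+1 then 1 / denom beta n else 1 + (cS E n.+1)%:R / denom beta n).

Lemma weight_rcons hs j :
  all (fun x => (0 < x <= (size hs).+1)%N) hs -> j \in iota 1 (size hs).+1 ->
  weight (rcons hs j) =
  (edges_present E hs && all (fun e => j == e.2) (out_edges E (size hs).+2))%:R *
  \prod_(k <- iota 1 (size hs).+1)
     gamma_ratio ((deg hs k)%:R + beta + (k == j)%:R) (Rt E (size hs).+2 k) *
  gamma_ratio (1 + beta) (din E (size hs).+2).
Proof.
move=> al jin; rewrite /weight edges_present_rcons size_rcons -mulrA; congr (_ * _).
have -> : iota 1 (size hs).+2 = iota 1 (size hs).+1 ++ [:: (size hs).+2].
  by rewrite -[(size hs).+2]addn1 iotaD add1n addn1.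
rewrite big_cat big_seq1; congr (_ * _).
  rewrite !big_seq; apply: eq_bigr => k; rewrite mem_iota add1n => /andP [_ kn].
  by rewrite deg_rcons (ltn_eqF kn) !natrD addr0 addrAC.
have c0 : count_mem (size hs).+2 hs = 0%N.
  by apply/count_memPn; apply/negP => /(allP al) /andP [_]; rewrite ltnn.
have jn : ((size hs).+2 == j) = false.
  by move: jin; rewrite mem_iota add1n => /andP [_ /gtn_eqF].
by rewrite Rt_top deg_rcons /deg c0 jn eqxx ltnn andbF /= addrC.
Qed.


Hypotheses (beta_pos : 0 < beta) (E_tails : uniq (map fst E)).

Lemma weight_step hs : all (fun x => (0 < x <= (size hs).+1)%N) hs ->
  \sum_(w <- omega (size hs).+1) pf beta (size hs).+1 w * weight (rcons hs (target hs w))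
  = growth (size hs).+1 * weight hs.
Proof.
move=> al; have vh : valid (size hs).+1 hs by rewrite /valid /= eqxx al.
rewrite (target_law _ beta (fun j => weight (rcons hs j)) _ hs vh) big_seq.
under eq_bigr => j jin do rewrite weight_rcons //.
rewrite -big_seq /growth /weight inVplus_out_edges.
set n := (size hs).+1; set D := denom beta n; set a := fun k => (deg hs k)%:R + beta.
set G1 := gamma_ratio (1 + beta) (din E n.+1); set ok := edges_present E hs.
have D0 : D != 0 by rewrite gt_eqF // denom_gt0.
have cSE : (cS E n.+1)%:R = \sum_(k <- iota 1 n) (Rt E n k)%:R :> R.
  by rewrite /cS natr_sum /index_iota subn1.
have := size_out_edges E n.+1 E_tails; have := Rt_split E n.
case Ef: (out_edges E n.+1) => [|e0 [|? ?]] // RtE _.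
- (* v_{n+1} has no out-edge in S: every target keeps S, and R_n = R_{n+1}. *)
  have Rn k : Rt E n k = Rt E n.+1 k by rewrite RtE addn0.
  rewrite /= cSE.
  have -> : \prod_(k <- iota 1 n) gamma_ratio (a k) (Rt E n k) =
            \prod_(k <- iota 1 n) gamma_ratio (a k) (Rt E n.+1 k).
    by apply: eq_bigr => k _; rewrite Rn.
  have -> : \sum_(k <- iota 1 n) (Rt E n k)%:R = \sum_(k <- iota 1 n) (Rt E n.+1 k)%:R :> R.
    by apply: eq_bigr => k _; rewrite Rn.
  rewrite [LHS](eq_bigr (fun j => ok%:R * G1 * (a j / D *
     \prod_(k <- iota 1 n) gamma_ratio (a k + (k == j)%:R) (Rt E n.+1 k)))); last first.
    by move=> j _; rewrite andbT /a; ring.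
  rewrite -mulr_sumr (expect_gamma_bump _ _ a _ _ (iota_uniq 1 n) _ D0); last first.
    by rewrite (sum_weights _ beta n hs vh).
  by rewrite mulr_suml; ring.
- (* v_{n+1} has the out-edge e0 in S: only the target e0.2 keeps S. *)
  have : e0 \in out_edges E n.+1 by rewrite Ef mem_seq1.
  rewrite mem_filter => /andP [/eqP e0n e0E].
  have j0in : e0.2 \in iota 1 n by move: (E_down _ e0E); rewrite e0n mem_iota add1n ltnS.
  rewrite [LHS](eq_bigr (fun j => (e0.2 == j)%:R * (a j / D * (ok%:R *
     \prod_(k <- iota 1 n) gamma_ratio (a k + (k == j)%:R) (Rt E n.+1 k) * G1)))); last first.
    move=> j _ /=; rewrite andbT [j == _]eq_sym; case: (e0.2 == j).
    + by rewrite andbT mul1r.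
    + by rewrite andbF !mul0r mulr0.
  rewrite sum_pick ?iota_uniq //.
  under [in RHS]eq_bigr do rewrite RtE /= addn0.
  rewrite (prod_gamma_incr _ _ a) ?iota_uniq //=.
  by rewrite /a; ring.
Qed.

Lemma run_weight k n hs : valid n hs ->
  run beta k n hs weight = (\prod_(n <= m < n + k) growth m) * weight hs.
Proof.
elim: k n hs => [|k IH] n hs vh /=; first by rewrite addn0 big_geq // mul1r.
rewrite big_seq (eq_bigr (fun w => pf beta n w * ((\prod_(n.+1 <= m < n.+1 + k) growth m) *
   weight (rcons hs (target hs w))))); last first.
  by move=> w win; rewrite IH //; apply: valid_rcons => //; apply: target_range.
rewrite -big_seq; under eq_bigr do rewrite mulrCA; rewrite -mulr_sumr.
case/and3P: vh => n0 /eqP sz al; have en : n = (size hs).+1 by rewrite sz prednK.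
rewrite en weight_step -?en // [in RHS]big_ltn; last by rewrite addnS ltnS leq_addr.
by rewrite addnS -addSn mulrCA mulrA.
Qed.

Lemma weight_nil : weight [::] = gamma_ratio beta (din E 1).
Proof.
rewrite /weight; have -> : edges_present E [::].
  by apply/allP => e /tail_ge2 e2 /=; rewrite leqNgt e2.
by rewrite mul1r big_seq1 Rt_top /deg /= add0r.
Qed.

Lemma weight_final t hs : (forall e, e \in E -> (e.1 <= t.+1)%N) -> size hs = t ->
  weight hs = (subgraph_of E t.+1 hs)%:R.
Proof.
move=> Et sz; rewrite /weight sz big1 ?mulr1 => [|k _]; last first.
  rewrite /Rt (eq_in_count (a2 := pred0)) ?count_pred0 ?gamma_ratio0 //.
  by move=> e /Et eT /=; rewrite ltnNge eT.
suff -> : edges_present E hs = subgraph_of E t.+1 hs by [].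
rewrite /edges_present /subgraph_of sz; apply: eq_in_all => e eE /=.
by rewrite (Et _ eE) (tail_ge2 _ eE).
Qed.

End Forest.

Lemma din_notin_Vminus E i : (forall e, e \in E -> (e.2 < e.1)%N) ->
  ~~ inVminus E i -> din E i = 0%N.
Proof.
move=> E_down nv; apply/eqP; rewrite -leqn0 leqNgt -has_count; apply: contra nv.
by move=> /hasP [e eE /eqP ei]; apply/hasP; exists e; rewrite // ei eqxx -ei E_down.
Qed.

Theorem lemma1 (R : realFieldType) (beta : R) (E : seq (nat * nat)) (t : nat) :
  0 < beta -> possible_forest E -> (1 <= t)%N ->
  (forall v, v \in vertices E -> (v <= t)%N) ->
  Prob beta t (subgraph_of E t) =
    beta / (beta + (din E 1)%:R)
    * (\prod_(1 <= i < t.+1 | inVminus E i) gamma_ratio (1 + beta) (din E i))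
    * (\prod_(2 <= i < t.+1 | inVplus E i) (1 / denom beta i.-1))
    * (\prod_(2 <= i < t.+1 | ~~ inVplus E i) (1 + (cS E i)%:R / denom beta i.-1)).
Proof.
move=> beta_pos [_ E_edges E_tails] t_pos Vt.
have E_down e : e \in E -> (1 <= e.2 < e.1)%N by move=> /E_edges [-> ->].
have E_tail_t e : e \in E -> (e.1 <= t)%N.
  by move=> eE; apply: Vt; rewrite mem_cat map_f.
case: t t_pos Vt E_tail_t => // t _ _ E_tail_t.
rewrite /Prob (run_ext _ beta t 1 [::] _ (weight _ beta E)) //; last first.
  move=> hs /and3P [_ /eqP sz _].
  by rewrite (weight_final _ _ _ E_down t hs E_tail_t sz); case: subgraph_of.
rewrite run_weight // weight_nil // gamma_ratio_shift; last by rewrite gt_eqF // ltr_wpDr.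
have Vminus_all : \prod_(1 <= i < t.+2 | inVminus E i) gamma_ratio (1 + beta) (din E i) =
    \prod_(1 <= i < t.+2) gamma_ratio (1 + beta) (din E i).
  rewrite big_mkcond; apply: eq_bigr => i _; case: ifP => // /negbT nv.
  by rewrite din_notin_Vminus ?gamma_ratio0 // => e /E_down /andP [].
rewrite Vminus_all big_nat_recl // !big_add1 /= /growth big_split /= prod_if.
by rewrite add0n; ring.
Qed.
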